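(* Let $\Upsilon$ be a finite alphabet with a partition $\{\Upsilon_0,\Upsilon_1\}$, where $|\Upsilon_0|=n_0$ and $|\Upsilon_1|=n_1$ are positive integers. Let $(\eta,\omega)=((\eta_\ell)_{\ell\ge1},(\omega_\ell)_{\ell\ge1})$ be a pair of nonnegative integer sequences, each with finite support. Then there exists an exhaustive prefix-free list over $\Upsilon$ whose (parity-preserving) length distribution is $(\eta,\omega)$ if and only if the following two conditions hold: (a) $\mathsf{K}^+=0$; (b) $\mathsf{K}^+_\ell\ge|\mathsf{K}^-_\ell|$ for every $\ell\ge1$.
   Context: A word over $\Upsilon$ is even (resp. odd) if it contains an even (resp. odd) number of symbols from $\Upsilon_1$; $(\Upsilon^\ell)_0$ and $(\Upsilon^\ell)_1$ denote the even and odd words of length $\ell$. A finite list $\mathcal{L}$ of nonempty words over $\Upsilon$ is prefix-free if no word in it is a prefix of another word in it, and exhaustive if every word over $\Upsilon$ either has a prefix in $\mathcal{L}$ or is a prefix of some word in $\mathcal{L}$. The (parity-preserving) length distribution of $\mathcal{L}$ is the pair $(\eta,\omega)$ with $\eta_\ell=|\mathcal{L}\cap(\Upsilon^\ell)_0|$ and $\omega_\ell=|\mathcal{L}\cap(\Upsilon^\ell)_1|$ for $\ell\ge1$. For integers $n$ and $\ell>0$ and an integer sequence $\mu=(\mu_i)_{i\ge1}$ with finite support, $\mathsf{K}_\ell(\mu,n)=n^\ell-\sum_{i=1}^{\ell}\mu_i n^{\ell-i}$. Define $\mathsf{K}^+_\ell=\mathsf{K}_\ell(\eta+\omega,n_0+n_1)$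 and $\mathsf{K}^-_\ell=\mathsf{K}_\ell(\eta-\omega,n_0-n_1)$ (with $0^0=1$). Let $\mathsf{r}$ be the largest index in the union of the supports of $\eta$ and $\omega$, and set $\mathsf{K}^\pm=\mathsf{K}^\pm_{\mathsf{r}}$. *)

From mathcomp Require Import all_boot all_order all_algebra.
Set Implicit Arguments. Unset Strict Implicit. Unset Printing Implicit Defensive.
Import Order.TTheory GRing.Theory Num.Theory.

(* Alphabet: a finType T, partitioned into U1 (= Upsilon_1) and its complement
   (= Upsilon_0).  Words are sequences over T. *)

Definition odd_word (T : finType) (U1 : {set T}) (w : seq T) : bool :=
  odd (count (fun x => x \in U1) w).

Definition prefix_free (T : eqType) (L : seq (seq T)) : Prop :=
  forall i j, i < size L -> j < size L -> i != j ->
    ~~ prefix (nth [::] L i) (nth [::] L j).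

Definition exhaustive (T : eqType) (L : seq (seq T)) : Prop :=
  forall w : seq T,
    (exists2 u, u \in L & prefix u w) \/ (exists2 u, u \in L & prefix w u).

Definition has_length_distribution (T : finType) (U1 : {set T})
    (L : seq (seq T)) (eta omega : nat -> nat) : Prop :=
  forall l, 0 < l ->
    count (fun w => (size w == l) && ~~ odd_word U1 w) L = eta l /\
    count (fun w => (size w == l) && odd_word U1 w) L = omega l.

Local Open Scope ring_scope.

(* K_l(mu, n) = n^l - sum_{i=1}^l mu_i n^(l-i), in int (0^0 = 1) *)
Definition Kfun (mu : nat -> int) (n : int) (l : nat) : int :=
  n ^+ l - \sum_(1 <= i < l.+1) mu i * n ^+ (l - i)%N.

Definition Kplus (eta omega : nat -> nat) (n0 n1 : nat) (l : nat) : int :=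
  Kfun (fun i => ((eta i + omega i)%N)%:Z) (n0 + n1)%:Z l.

Definition Kminus (eta omega : nat -> nat) (n0 n1 : nat) (l : nat) : int :=
  Kfun (fun i => (eta i)%:Z - (omega i)%:Z) (n0%:Z - n1%:Z) l.

(* r is the largest index (>= 1) in the union of the supports of eta, omega;
   by convention r = 0 when both sequences vanish on all indices >= 1 *)
Definition is_max_index (eta omega : nat -> nat) (r : nat) : Prop :=
  (forall l, (r < l)%N -> eta l = 0%N /\ omega l = 0%N) /\
  ((0 < r)%N -> (0 < eta r + omega r)%N).

(* For a prefix-free list L, call frontier the words of length k none of whose
   prefixes lies in L.  A word has n0 children of its own parity and n1 of the
   other one, and the frontier at length k+1 consists of the children of the
   frontier at length k that are not in L.  Hence the numbers e_k and o_k of even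
   and odd frontier words satisfy the recurrences defining K^+ and K^-, namely
   e_k + o_k = K^+_k and e_k - o_k = K^-_k, so that (b) just says that e_k and o_k
   are nonnegative, and L is exhaustive iff its frontier at the maximal length r
   is empty, i.e. iff K^+_r = 0.  Conversely, under (b) the greedy construction,
   which puts eta_l even and omega_l odd children of the current frontier into
   the list at each length l, never runs out of words, and (a) makes the list it
   produces exhaustive. *)

From mathcomp Require Import all_boot all_order all_algebra.
From mathcomp Require Import zify ring.
Import Order.TTheory GRing.Theory Num.Theory.
Set Implicit Arguments. Unset Strict Implicit. Unset Printing Implicit Defensive.

Section KraftNumbers.

Variables (eta omega : nat -> nat) (n0 n1 : nat).

Local Open Scope ring_scope.

Local Notation Kp := (Kplus eta omega n0 n1).
Local Notation Km := (Kminus eta omega n0 n1).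

Lemma Kfun0 (mu : nat -> int) (n : int) : Kfun mu n 0 = 1.
Proof. by rewrite /Kfun big_geq // subr0. Qed.

Lemma KfunS (mu : nat -> int) (n : int) l :
  Kfun mu n l.+1 = n * Kfun mu n l - mu l.+1.
Proof.
rewrite /Kfun big_nat_recr //= subnn expr0 mulr1 mulrBr exprS mulr_sumr opprD addrA.
congr (_ - _ - _); apply: eq_big_nat => i /andP [_ Hi].
by rewrite subSn // exprS mulrCA.
Qed.

Definition K_counts k (c d : nat) := (c + d)%N%:Z = Kp k /\ c%:Z - d%:Z = Km k.

Lemma K_counts0 : K_counts 0 1 0.
Proof. by rewrite /K_counts /Kplus /Kminus !Kfun0. Qed.

Lemma K_countsS k (c d c' d' : nat) : K_counts k c d ->
  (c' + eta k.+1 = n0 * c + n1 * d)%N -> (d' + omega k.+1 = n1 * c + n0 * d)%N ->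
  K_counts k.+1 c' d'.
Proof.
rewrite /K_counts /Kplus /Kminus !KfunS => -[<- <-] /(congr1 Posz) Ec /(congr1 Posz) Ed.
rewrite !PoszD !PoszM in Ec Ed; rewrite PoszD.
have -> : c'%:Z = n0%:Z * c%:Z + n1%:Z * d%:Z - (eta k.+1)%:Z by rewrite -Ec addrK.
have -> : d'%:Z = n1%:Z * c%:Z + n0%:Z * d%:Z - (omega k.+1)%:Z by rewrite -Ed addrK.
by split; ring.
Qed.

Lemma K_counts_norm k c d : K_counts k c d -> `|Km k| <= Kp k.
Proof. by move=> [<- <-]; rewrite ler_norml; apply/andP; split; lia. Qed.

Lemma K_counts_feasible k c d : K_counts k c d -> `|Km k.+1| <= Kp k.+1 ->
  (eta k.+1 <= n0 * c + n1 * d)%N /\ (omega k.+1 <= n1 * c + n0 * d)%N.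
Proof.
rewrite /K_counts /Kplus /Kminus !KfunS => -[<- <-].
rewrite ler_norml !PoszD => /andP [lo hi]; split; lia.
Qed.

End KraftNumbers.

Section SeqCount.

Variable T : eqType.
Implicit Types (a b : pred T) (s : seq T).

Lemma count_take_filter a n s : count a (take n (filter a s)) = minn n (count a s).
Proof.
have : all a (take n (filter a s)).
  by apply/allP => x /mem_take; rewrite mem_filter => /andP [].
by rewrite all_count => /eqP ->; rewrite size_take_min size_filter.
Qed.

Lemma count_take_filter_disjoint a b n s :
  (forall x, a x -> ~~ b x) -> count b (take n (filter a s)) = 0.
Proof.
move=> ab; apply/eqP; rewrite eqn0Ngt -has_count.
by apply/hasPn => x /mem_take; rewrite mem_filter => /andP [/ab].
Qed.

Lemma count_level_const (p : pred (seq T)) (s : seq (seq T)) k l :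
  {in s, forall x, size x = k} ->
  count (fun x => (size x == l) && p x) s = if l == k then count p s else 0.
Proof.
move=> size_s; case: eqP => [->|ne_lk].
  by apply: eq_in_count => x /size_s ->; rewrite eqxx.
apply/eqP; rewrite eqn0Ngt -has_count; apply/hasPn => x /size_s ->.
by rewrite eq_sym (introF eqP ne_lk).
Qed.

End SeqCount.

Section Prefixes.

Variable T : eqType.
Implicit Types (u v w : seq T) (L : seq (seq T)).

Lemma prefix_rconsE u w x : prefix u (rcons w x) = (u == rcons w x) || prefix u w.
Proof.
elim: w u => [|y w IH] [|a u] //=.
  by case: u => [|b u]; rewrite eqseq_cons ?andbF ?orbF.
by rewrite eqseq_cons IH andb_orr.
Qed.

Lemma prefix_size_eq u v : prefix u v -> (size v <= size u)%N -> u = v.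
Proof. by move=> + le_vu; rewrite prefixE take_oversize // => /eqP. Qed.

Lemma prefix_cat_total u w s : prefix u (w ++ s) -> prefix u w || prefix w u.
Proof.
rewrite prefixE take_cat => /eqP; case: ltnP => _ <-.
  by rewrite prefix_take.
by rewrite prefix_prefix orbT.
Qed.

Lemma prefix_freeP L :
  prefix_free L <-> uniq L /\ {in L &, forall u v, prefix u v -> u = v}.
Proof.
split=> [pfL | [uL eqL] i j iL jL ij].
  split.
    apply/(uniqPn [::]) => -[i [j [ij jL eq_ij]]].
    by have := pfL i j (ltn_trans ij jL) jL; rewrite neq_ltn ij eq_ij prefix_refl => /(_ isT).
  move=> u v uL vL puv; apply/eqP; apply: contraTT puv => neq_uv.
  rewrite -(nth_index [::] uL) -(nth_index [::] vL); apply: pfL; rewrite ?index_mem //.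
  by apply: contra neq_uv => /eqP eq_idx; rewrite -(nth_index [::] uL) eq_idx nth_index.
apply/negP => /(eqL _ _ (mem_nth _ iL) (mem_nth _ jL)) /eqP.
by rewrite nth_uniq // (negbTE ij).
Qed.

End Prefixes.

Section Words.

Variables (T : finType) (U1 : {set T}).
Implicit Types (u v w : seq T) (F L : seq (seq T)).

Local Notation n0 := #|~: U1|.
Local Notation n1 := #|U1|.
Local Notation even_word := (fun w => ~~ odd_word U1 w).

Definition children F := [seq rcons w x | w <- F, x <- enum T].

Lemma mem_children_rcons F w x : (rcons w x \in children F) = (w \in F).
Proof.
apply/allpairsP/idP => [[[w' x'] /= [w'F _ /rcons_inj[-> _]]] // | wF].
by exists (w, x); rewrite /= mem_enum.
Qed.

Lemma nil_notin_children F : [::] \notin children F.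
Proof. by apply/allpairsP => -[[w x] /= [_ _]]; case: w. Qed.

Lemma children_uniq F : uniq F -> uniq (children F).
Proof.
move=> uF; apply: allpairs_uniq => //; first exact: enum_uniq.
by move=> [w x] [w' x'] _ _ /= /rcons_inj [-> ->].
Qed.

Lemma count_children_cons (p : pred (seq T)) w F :
  count p (children (w :: F)) = (count (preim (rcons w) p) (enum T) + count p (children F))%N.
Proof. by rewrite /children allpairs_cons count_cat count_map. Qed.

Lemma count_mem_enum (A : {set T}) : count (mem A) (enum T) = #|A|.
Proof. by rewrite cardE enumT /enum_mem size_filter. Qed.

Lemma odd_word_rcons w x : odd_word U1 (rcons w x) = odd_word U1 w (+) (x \in U1).
Proof. by rewrite /odd_word -cats1 count_cat /= addn0 oddD; case: (x \in U1). Qed.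

Lemma count_even_rcons w :
  count (preim (rcons w) even_word) (enum T) = if odd_word U1 w then n1 else n0.
Proof.
rewrite -!count_mem_enum; case: ifP => odd_w; apply: eq_count => x /=;
  by rewrite odd_word_rcons odd_w ?inE ?negbK.
Qed.

Lemma count_odd_rcons w :
  count (preim (rcons w) (odd_word U1)) (enum T) = if odd_word U1 w then n0 else n1.
Proof.
rewrite -!count_mem_enum; case: ifP => odd_w; apply: eq_count => x /=;
  by rewrite odd_word_rcons odd_w ?inE.
Qed.

Lemma count_even_children F :
  count even_word (children F) = (n0 * count even_word F + n1 * count (odd_word U1) F)%N.
Proof.
elim: F => [|w F IH] /=; first by rewrite !muln0.
by rewrite count_children_cons IH count_even_rcons; case: (odd_word U1 w) => /=; lia.
Qed.

Lemma count_odd_children F :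
  count (odd_word U1) (children F) = (n1 * count even_word F + n0 * count (odd_word U1) F)%N.
Proof.
elim: F => [|w F IH] /=; first by rewrite !muln0.
by rewrite count_children_cons IH count_odd_rcons; case: (odd_word U1 w) => /=; lia.
Qed.

Fixpoint frontier L k : seq (seq T) :=
  if k is k'.+1 then [seq v <- children (frontier L k') | v \notin L] else [:: [::]].

Lemma frontier_uniq L k : uniq (frontier L k).
Proof. by elim: k => //= k IH; apply/filter_uniq/children_uniq. Qed.

Lemma size_frontier L k w : w \in frontier L k -> size w = k.
Proof.
elim: k w => [|k IH] w /=; first by rewrite inE => /eqP ->.
case/lastP: w => [|w x]; first by rewrite mem_filter (negbTE (nil_notin_children _)) andbF.
by rewrite mem_filter mem_children_rcons size_rcons => /andP [_ /IH ->].
Qed.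

Lemma size_children_frontier L k v : v \in children (frontier L k) -> size v = k.+1.
Proof.
case/lastP: v => [|w x]; first by rewrite (negbTE (nil_notin_children _)).
by rewrite mem_children_rcons size_rcons => /size_frontier ->.
Qed.

Section PrefixFreeList.

Variable L : seq (seq T).
Hypothesis nilL : [::] \notin L.

Lemma mem_frontier k w :
  (w \in frontier L k) = (size w == k) && ~~ has (fun u => prefix u w) L.
Proof.
elim: k w => [|k IH] w.
  case: w => [|a w] //=; rewrite inE eqxx; apply/esym/hasPn => u uL.
  by case: u uL => // uL; move: nilL; rewrite uL.
case/lastP: w => [|w x] /=.
  by rewrite mem_filter (negbTE (nil_notin_children _)) andbF.
have -> : has (fun u => prefix u (rcons w x)) L = (rcons w x \in L) || has (fun u => prefix u w) L.
  by rewrite -has_pred1 -has_predU; apply: eq_has => u; rewrite /= prefix_rconsE.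
by rewrite mem_filter mem_children_rcons IH size_rcons eqSS negb_or andbCA.
Qed.

Lemma exhaustive_frontier r (t0 : T) : {in L, forall u, size u <= r} ->
  exhaustive L <-> frontier L r = [::].
Proof.
move=> size_le; split=> [exL | frontier0 w].
  case E: (frontier L r) => [//|w F].
  have := mem_head w F; rewrite -E mem_frontier => /andP [/eqP size_w /hasPn noprefix].
  case: (exL w) => -[u uL]; first by move=> puw; have := noprefix u uL; rewrite puw.
  move=> /prefix_size_eq; rewrite size_w size_le // => /(_ isT) wu.
  by have := noprefix u uL; rewrite -wu prefix_refl.
set v := take r (w ++ nseq r t0).
have : v \notin frontier L r by rewrite frontier0.
rewrite mem_frontier size_takel ?size_cat ?size_nseq ?leq_addl // eqxx negbK.
case/hasP=> u uL /prefix_trans/(_ (prefix_take _ _)) /prefix_cat_total /orP [].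
  by left; exists u.
by right; exists u.
Qed.

Hypothesis pfL : prefix_free L.

Lemma count_frontierS (p : pred (seq T)) k :
  (count p (frontier L k.+1) + count (fun w => (size w == k.+1) && p w) L)%N =
  count p (children (frontier L k)).
Proof.
have /prefix_freeP [uniq_L eqL] := pfL.
set C := children (frontier L k).
have inL_children v : v \in L -> (v \in C) = (size v == k.+1).
  case/lastP: v => [|w x vL]; first by rewrite (negbTE nilL).
  rewrite mem_children_rcons mem_frontier size_rcons eqSS.
  case: (size w == k) => //=; apply/hasPn => u uL; apply/negP => puw.
  have := eqL u _ uL vL (prefix_trans puw (prefix_rcons w x)).
  by move/(congr1 size); rewrite size_rcons; have := size_prefix puw; lia.
rewrite -(permP (permEl (perm_filterC (fun v => v \in L) C)) p) count_cat addnC.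
congr (_ + _); rewrite -!size_filter; apply/perm_size/uniq_perm;
  rewrite ?filter_uniq ?children_uniq ?frontier_uniq // => v.
rewrite !mem_filter; have [vL | vL] := boolP (v \in L); last by rewrite /= !andbF.
by rewrite /= inL_children // andbT andbC.
Qed.

Lemma prefix_free_cat_frontier k N :
  {in L, forall u, size u <= k} -> uniq N -> {subset N <= children (frontier L k)} ->
  prefix_free (L ++ N).
Proof.
move=> size_le uniq_N sub_N.
have /prefix_freeP [uniq_L eqL] := pfL.
have N_frontier v : v \in N -> size v = k.+1 /\ ~~ has (fun u => prefix u v) L.
  move=> vN; have vC := sub_N v vN.
  have size_v := size_children_frontier vC.
  have : v \in frontier L k.+1.
    rewrite /= mem_filter vC andbT; apply/negP => /size_le; rewrite size_v; lia.
  by rewrite mem_frontier => /andP [_ ->].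
apply/prefix_freeP; split.
  rewrite cat_uniq uniq_L uniq_N andbT /=; apply/hasPn => v /N_frontier [size_v _].
  by apply/negP => /size_le; rewrite size_v; lia.
move=> u v; rewrite !mem_cat => /orP [uL | uN] /orP [vL | vN] puv.
- exact: eqL.
- by have [_ /hasPn /(_ u uL)] := N_frontier v vN; rewrite puv.
- have [size_u _] := N_frontier u uN; have := size_le v vL; have := size_prefix puv.
  by rewrite size_u => /leq_trans/[apply]; rewrite ltnn.
- have [size_u _] := N_frontier u uN; have [size_v _] := N_frontier v vN.
  by apply: (prefix_size_eq puv); rewrite size_u size_v.
Qed.

End PrefixFreeList.

Section LengthDistribution.

Variables eta omega : nat -> nat.

Local Notation Kp := (Kplus eta omega n0 n1).
Local Notation Km := (Kminus eta omega n0 n1).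
Local Notation level l p := (fun w => (size w == l) && p w).

Lemma frontier_K_counts L k : [::] \notin L -> prefix_free L ->
  (forall l, (0 < l <= k)%N ->
     count (level l even_word) L = eta l /\ count (level l (odd_word U1)) L = omega l) ->
  K_counts eta omega n0 n1 k (count even_word (frontier L k)) (count (odd_word U1) (frontier L k)).
Proof.
move=> nilL pfL; elim: k => [|k IH] dist; first exact: K_counts0.
have [dist_e dist_o] := dist k.+1 (leqnn _).
apply: (K_countsS (IH _)).
- by move=> l /andP [l_gt0 l_le]; apply: dist; rewrite l_gt0 leqW.
- by rewrite -count_even_children -(count_frontierS nilL pfL) dist_e.
- by rewrite -count_odd_children -(count_frontierS nilL pfL) dist_o.
Qed.

Lemma max_index_size_le L r : has_length_distribution U1 L eta omega ->
  is_max_index eta omega r -> {in L, forall u, size u <= r}.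
Proof.
move=> dist [max_r _] u uL; rewrite leqNgt; apply/negP => r_lt_u.
have [eta0 omega0] := max_r _ r_lt_u.
have [dist_e dist_o] := dist (size u) (leq_ltn_trans (leq0n r) r_lt_u).
case odd_u: (odd_word U1 u).
  have : has (level (size u) (odd_word U1)) L by apply/hasP; exists u; rewrite //= eqxx.
  by rewrite has_count dist_o omega0.
have : has (level (size u) even_word) L by apply/hasP; exists u; rewrite //= eqxx odd_u.
by rewrite has_count dist_e eta0.
Qed.

Lemma distribution_frontier_K_counts L k : [::] \notin L -> prefix_free L ->
  has_length_distribution U1 L eta omega ->
  K_counts eta omega n0 n1 k (count even_word (frontier L k)) (count (odd_word U1) (frontier L k)).
Proof. by move=> nilL pfL dist; apply: frontier_K_counts => // l /andP [/dist]. Qed.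

Lemma exhaustive_Kplus0 L r (t0 : T) : [::] \notin L -> prefix_free L ->
  has_length_distribution U1 L eta omega -> is_max_index eta omega r ->
  exhaustive L <-> (Kp r = 0)%R.
Proof.
move=> nilL pfL dist max_r.
rewrite (exhaustive_frontier nilL t0 (max_index_size_le dist max_r)).
have [<- _] := distribution_frontier_K_counts r nilL pfL dist.
rewrite addnC (count_predC (odd_word U1)); split=> [-> // | /eqP].
by rewrite eqz_nat => /eqP /size0nil.
Qed.

Definition choose_children l F :=
  take (eta l) [seq v <- children F | even_word v] ++
  take (omega l) [seq v <- children F | odd_word U1 v].

Fixpoint greedy m : seq (seq T) :=
  if m is m'.+1 then greedy m' ++ choose_children m (frontier (greedy m') m') else [::].

Lemma mem_choose_children l F v : v \in choose_children l F -> v \in children F.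
Proof. by rewrite mem_cat => /orP [] /mem_take; rewrite mem_filter => /andP []. Qed.

Lemma choose_children_uniq l F : uniq F -> uniq (choose_children l F).
Proof.
move=> uniq_F; have uniq_C := children_uniq uniq_F.
rewrite cat_uniq !take_uniq ?filter_uniq //= andbT.
apply/hasPn => v /mem_take; rewrite mem_filter => /andP [odd_v _].
by apply/negP => /mem_take; rewrite mem_filter odd_v.
Qed.

Lemma count_choose_children l F :
  (eta l <= count even_word (children F))%N -> (omega l <= count (odd_word U1) (children F))%N ->
  count even_word (choose_children l F) = eta l /\
  count (odd_word U1) (choose_children l F) = omega l.
Proof.
move=> le_eta le_omega.
rewrite !count_cat !count_take_filter ?count_take_filter_disjoint //.
  by rewrite addn0 add0n !(minn_idPl _).
by move=> w; rewrite negbK.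
Qed.

Lemma greedy_size m : {in greedy m, forall u, 0 < size u <= m}.
Proof.
elim: m => [|m IH] u; first by rewrite in_nil.
rewrite mem_cat => /orP [/IH /andP [u_gt0 u_le] |].
  by rewrite u_gt0 leqW.
by move=> /mem_choose_children /size_children_frontier ->; rewrite leqnn.
Qed.

Lemma nil_notin_greedy m : [::] \notin greedy m.
Proof. by apply/negP => /greedy_size. Qed.

Lemma greedy_prefix_free m : prefix_free (greedy m).
Proof.
elim: m => [|m IH] /=; first by move=> i j.
apply: prefix_free_cat_frontier (nil_notin_greedy m) IH _ _ _ _ (@mem_choose_children _ _).
- by move=> u /greedy_size /andP [].
- exact/choose_children_uniq/frontier_uniq.
Qed.

Hypothesis K_le : forall l, (0 < l)%N -> (`|Km l| <= Kp l)%R.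

Lemma count_greedy m l : (0 < l)%N ->
  count (level l even_word) (greedy m) = (if l <= m then eta l else 0)%N /\
  count (level l (odd_word U1)) (greedy m) = (if l <= m then omega l else 0)%N.
Proof.
elim: m l => [|m IH] l l_gt0; first by rewrite leqNgt l_gt0.
set F := frontier (greedy m) m; set N := choose_children m.+1 F.
have K_F : K_counts eta omega n0 n1 m (count even_word F) (count (odd_word U1) F).
  apply: frontier_K_counts (nil_notin_greedy m) (@greedy_prefix_free m) _.
  by move=> l' /andP [l'_gt0 l'_le]; have := IH l' l'_gt0; rewrite l'_le.
have [le_eta le_omega] := K_counts_feasible K_F (K_le (ltn0Sn m)).
rewrite -count_even_children -count_odd_children in le_eta le_omega.
have [N_eta N_omega] := count_choose_children le_eta le_omega.
have size_N : {in N, forall v, size v = m.+1}.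
  by move=> v /mem_choose_children /size_children_frontier.
rewrite /= !(count_cat _ (greedy m)) -/F -/N.
rewrite (count_level_const even_word _ size_N) (count_level_const (odd_word U1) _ size_N).
rewrite N_eta N_omega.
have [IH_eta IH_omega] := IH l l_gt0; rewrite IH_eta IH_omega.
by rewrite -[(l <= m)%N]ltnS; case: ltngtP => [_|_|->]; rewrite ?addn0.
Qed.

Lemma greedy_distribution r : is_max_index eta omega r ->
  has_length_distribution U1 (greedy r) eta omega.
Proof.
move=> [max_r _] l l_gt0; have := count_greedy r l_gt0.
by case: leqP => // /max_r [-> ->].
Qed.

End LengthDistribution.

End Words.

Lemma exists_max_index (eta omega : nat -> nat) N :
  (forall l, (N < l)%N -> eta l = 0%N) -> (forall l, (N < l)%N -> omega l = 0%N) ->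
  exists r, is_max_index eta omega r.
Proof.
elim: N => [|N IH] eta_fin omega_fin.
  by exists 0%N; split=> // l l_gt0; rewrite eta_fin ?omega_fin.
have [sum0 | sum_gt0] := posnP (eta N.+1 + omega N.+1); last first.
  by exists N.+1; split=> // l /[dup] /eta_fin -> /omega_fin ->.
have fin l : (N < l)%N -> eta l = 0%N /\ omega l = 0%N.
  by rewrite leq_eqVlt => /orP [/eqP <- | /[dup] /eta_fin -> /omega_fin ->] //; lia.
by apply: IH => l /fin [].
Qed.

Local Open Scope ring_scope.

Theorem theorem4 (T : finType) (U1 : {set T}) (eta omega : nat -> nat) (N : nat)
  (n0_pos : (0 < #|~: U1|)%N) (n1_pos : (0 < #|U1|)%N)
  (eta_fin : forall l, (N < l)%N -> eta l = 0%N)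
  (omega_fin : forall l, (N < l)%N -> omega l = 0%N) :
  (exists L : seq (seq T),
      all (fun w => w != [::]) L /\ prefix_free L /\ exhaustive L /\
      has_length_distribution U1 L eta omega)
  <->
  ((forall r, is_max_index eta omega r ->
       Kplus eta omega #|~: U1| #|U1| r = 0) /\
   (forall l, (0 < l)%N ->
       `|Kminus eta omega #|~: U1| #|U1| l| <= Kplus eta omega #|~: U1| #|U1| l)).
Proof.
(* [n1_pos] only provides a letter for padding words. *)
have [t0 _] : exists t0 : T, t0 \in U1 by apply/card_gt0P.
split=> [[L [nonnil [pfL [exL distL]]]] | [K_max K_le]].
  have nilL : [::] \notin L by apply/negP => /(allP nonnil).
  split=> [r max_r | l _]; first exact/(exhaustive_Kplus0 t0 nilL pfL distL max_r).
  exact: K_counts_norm (distribution_frontier_K_counts l nilL pfL distL).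
have [r max_r] := exists_max_index eta_fin omega_fin.
have nil_greedy := @nil_notin_greedy _ U1 eta omega r.
have pf_greedy := @greedy_prefix_free _ U1 eta omega r.
have dist_greedy := greedy_distribution K_le max_r.
exists (greedy U1 eta omega r); split; [|split; [|split]] => //.
- by apply/allP => u; apply: contraTneq => ->.
- exact/(exhaustive_Kplus0 t0 nil_greedy pf_greedy dist_greedy max_r)/K_max.
Qed.
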